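(* Consider a finite-state, finite-action SMDP satisfying (M) that is weakly communicating, and let $f$ satisfy (F). Let $h$ be as below. Then the set $\mathcal{Q}_f=\{x:h(x)=0\}$ is Lyapunov stable for the ODE $\dot x(t)=h(x(t))$ with respect to $\|\cdot\|_\infty$. That is, for every $\epsilon>0$ there exists $\delta>0$ such that every solution starting within distance $\delta$ of $\mathcal{Q}_f$ remains within distance $\epsilon$ of $\mathcal{Q}_f$ for all $t\ge0$.
   Context: $\mathcal{S},\mathcal{A}$ are finite, $d=|\mathcal{S}\times\mathcal{A}|$, and $\mathbf{1}$ is the all-ones vector. For each $(s,a)$, $\mathbb{P}_{sa}$ is a Borel probability measure on $\mathcal{S}\times\mathbb{R}_+\times\mathbb{R}$, the joint law of (next state $S$, holding time $\tau$, reward $R$). (M): (i) for some $\epsilon>0$, $\mathbb{P}_{sa}(\tau\le\epsilon)<1$ for all $(s,a)$; (ii) $\mathbb{E}_{sa}\tau^2,\mathbb{E}_{sa}R^2<\infty$. Let $r_{sa}=\mathbb{E}_{sa}R$, $t_{sa}=\mathbb{E}_{sa}\tau>0$, and $p^a_{ss'}=\mathbb{P}_{sa}(S=s')$. The optimal reward rate is $r^*(s)=\sup_\pi\liminf_{t\to\infty}t^{-1}\mathbb{E}^\pi_s[\sum_{n=1}^{N_t}R_n]$, with $N_t$ the number of transitions by time $t$. Weakly communicating means there is a unique closed communicating class (each of its states reachable from every other under some policy, and no policy can leave it) and all other states are transient under every policy; then $r^*$ is a constant. $\mathcal{Q}$ is the set of $q$ with $q(s,a)=r_{sa}-t_{sa}r^*+\sum_{s'}p^a_{ss'}\max_{a'}q(s',a')$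 for all $(s,a)$. (F): $g$ is SISTr at $x$ if $c\mapsto g(x+c\mathbf{1})$ is strictly increasing and onto $\mathbb{R}$; (i) $f$ is Lipschitz and SISTr at every point; (ii) $f(cx)/c\to f_\infty(x)$ pointwise as $c\uparrow\infty$, with $f_\infty$ SISTr at $0$. $\mathcal{Q}_f=\{q\in\mathcal{Q}:f(q)=r^*\}$. Fix $\bar\alpha\in(0,\min t_{sa}]$ and let $h(q)=\mathcal{T}(q)-q-\bar\alpha f(q)$, where $$\mathcal{T}(q)(s,a)=\frac{\bar\alpha}{t_{sa}}\Big(r_{sa}+\sum_{s'}p^a_{ss'}\max_{a'}q(s',a')\Big)+\Big(1-\frac{\bar\alpha}{t_{sa}}\Big)q(s,a).$$ *)

From HB Require Import structures.
From mathcomp Require Import all_boot all_order all_algebra.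
From mathcomp Require Import all_classical all_reals all_analysis.
Set Implicit Arguments. Unset Strict Implicit. Unset Printing Implicit Defensive.
Import Order.TTheory GRing.Theory Num.Theory.
Import numFieldNormedType.Exports.
Local Open Scope classical_set_scope.
Local Open Scope ring_scope.

(* An SMDP kernel: for every (s,a) the joint law P_sa of (S, tau, R) on
   S x R x R.  Since S is finite with the discrete sigma-algebra, such a
   measure is the same thing as a family, indexed by the next state s',
   of (sub-)measures on R x R:  kern s a s' B = P_sa(S = s', (tau,R) in B). *)
Definition smdp_kernel (R : realType) (S A : finType) :=
  S -> A -> S -> {measure set (R * R) -> \bar R}.

Section SMDP.
Context {R : realType} {S A : finType} (P : smdp_kernel R S A).

Definition is_smdp_law : Prop :=
  (forall s a, (\sum_(s' : S) P s a s' setT = 1%:E)%E) /\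
  (forall s a s', P s a s' [set z | z.1 < 0] = 0%E).

Definition cond_M : Prop :=
  (exists eps : R, 0 < eps /\
     forall s a, (\sum_(s' : S) P s a s' [set z | (z.1 <= eps)%R] < 1%:E)%E) /\
  (forall s a s', (\int[P s a s']_z ((z.1) ^+ 2)%:E < +oo)%E) /\
  (forall s a s', (\int[P s a s']_z ((z.2) ^+ 2)%:E < +oo)%E).

Definition ptrans (s : S) (a : A) (s' : S) : R := fine (P s a s' setT).
Definition rmean (sa : S * A) : R :=
  \sum_(s' : S) fine (\int[P sa.1 sa.2 s']_z (z.2)%:E)%E.
Definition tmean (sa : S * A) : R :=
  \sum_(s' : S) fine (\int[P sa.1 sa.2 s']_z (z.1)%:E)%E.

Definition is_policy (d : S -> A -> R) : Prop :=
  (forall s a, 0 <= d s a) /\ (forall s, \sum_(a : A) d s a = 1).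
Definition policy_rel (d : S -> A -> R) : rel S :=
  fun s s' => 0 < \sum_(a : A) d s a * ptrans s a s'.
Definition reach (d : S -> A -> R) (s s' : S) : bool := connect (policy_rel d) s s'.
Definition transient (d : S -> A -> R) (s : S) : Prop :=
  exists s', reach d s s' /\ ~~ reach d s' s.

Definition closed_comm_class (C : {set S}) : Prop :=
  (exists s, s \in C) /\
  (forall s s', s \in C -> s' \in C ->
     exists d, is_policy d /\ reach d s s') /\
  (forall s a s', s \in C -> 0 < ptrans s a s' -> s' \in C).

Definition weakly_communicating : Prop :=
  exists C : {set S},
    closed_comm_class C /\
    (forall C', closed_comm_class C' -> C' = C) /\
    (forall s, s \notin C -> forall d, is_policy d -> transient d s).

End SMDP.

Section Vec.
Context {R : realType} {I : finType}.

Definition ones : I -> R := fun _ => 1.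
Definition vadd (x y : I -> R) : I -> R := fun i => x i + y i.
Definition vsub (x y : I -> R) : I -> R := fun i => x i - y i.
Definition vscale (c : R) (x : I -> R) : I -> R := fun i => c * x i.
Definition supnorm (x : I -> R) : R := \big[Num.max/0]_(i : I) `|x i|.

Definition SISTr (g : (I -> R) -> R) (x : I -> R) : Prop :=
  (forall c1 c2 : R, c1 < c2 ->
     g (vadd x (vscale c1 ones)) < g (vadd x (vscale c2 ones))) /\
  (forall y : R, exists c : R, g (vadd x (vscale c ones)) = y).

Definition cond_F (f : (I -> R) -> R) : Prop :=
  (exists L : R, forall x y, `|f x - f y| <= L * supnorm (vsub x y)) /\
  (forall x, SISTr f x) /\
  (exists finf : (I -> R) -> R,
     (forall x, (fun c : R => f (vscale c x) / c) @ +oo --> finf x) /\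
     SISTr finf (fun _ => 0)).

Definition ode_solution (F : (I -> R) -> (I -> R)) (x : R -> I -> R) : Prop :=
  forall i : I,
    (forall t : R, 0 < t -> is_derive t (1 : R) (fun u : R => x u i) (F (x t) i)) /\
    ((fun u : R => x u i) @ (0 : R)^'+ --> x 0 i).

End Vec.

Definition Top {R : realType} {S A : finType} (P : smdp_kernel R S A)
  (alpha : R) (q : S * A -> R) : S * A -> R :=
  fun sa => alpha / tmean P sa *
              (rmean P sa + \sum_(s' : S) ptrans P sa.1 sa.2 s' *
                              \big[Num.max/q (s', sa.2)]_(a' : A) q (s', a'))
            + (1 - alpha / tmean P sa) * q sa.

Definition hfield {R : realType} {S A : finType} (P : smdp_kernel R S A)
  (alpha : R) (f : (S * A -> R) -> R) (q : S * A -> R) : S * A -> R :=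
  fun sa => Top P alpha q sa - q sa - alpha * f q.

From HB Require Import structures.
From mathcomp Require Import all_boot all_order all_algebra.
From mathcomp Require Import all_classical all_reals all_analysis.
From mathcomp Require Import ring lra.
Import Order.TTheory GRing.Theory Num.Theory.
Import numFieldNormedType.Exports.
Local Open Scope classical_set_scope.
Local Open Scope ring_scope.
Set Implicit Arguments. Unset Strict Implicit. Unset Printing Implicit Defensive.

(* Let qs be a zero of h and y = x - qs.  At a coordinate where y is maximal
   (minimal) the max-plus part of T can only pull h(x) - h(qs) down (up), so
   there h(x) is at most (at least) -alpha (f(x) - f(qs)).  Hence the span of y
   cannot grow, and once all of y lies above eta (below -eta) with span at most
   3 delta, the Lipschitz bound and a uniform increment rho of f along 1 force
   f(x) > f(qs) (f(x) < f(qs)), which pushes the extreme coordinate back.  A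
   real-induction argument with a slowly growing barrier turns these derivative
   signs into |y| < eta + 3 delta for all times.
   The increment rho is uniform because the zero set is bounded: the gain f(q)
   of a zero is at most sum |r|/t; under weak communication a greedy path from
   the top state and an arbitrary path to the bottom state, both through the
   closed class, bound the spread of its values; and (F) then bounds its level. *)

Section SupNorm.
Context {R : realType} {I : finType}.
Implicit Types (v : I -> R) (F : I -> R).

Lemma supnorm_ge0 v : 0 <= supnorm v.
Proof. exact: bigmax_ge_id. Qed.

Lemma ler_supnorm v i : `|v i| <= supnorm v.
Proof. exact: le_bigmax. Qed.

Lemma supnorm_le v b : 0 <= b -> (forall i, `|v i| <= b) -> supnorm v <= b.
Proof. by move=> ? ?; apply: bigmax_le. Qed.

Lemma supnorm_lt v b : 0 < b -> (forall i, `|v i| < b) -> supnorm v < b.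
Proof. by move=> ? ?; apply: bigmax_lt. Qed.

Lemma exists_argmax F (i0 : I) : exists i, forall j, F j <= F i.
Proof.
by case: (@arg_maxP _ _ _ i0 xpredT F isT) => i _ Fi; exists i => j; apply: Fi.
Qed.

Lemma exists_argmin F (i0 : I) : exists i, forall j, F i <= F j.
Proof.
by case: (@arg_minP _ _ _ i0 xpredT F isT) => i _ Fi; exists i => j; apply: Fi.
Qed.

End SupNorm.

Section Convex.
Context {R : realType} {I : finType} (w : I -> R).
Hypothesis w_ge0 : forall i, 0 <= w i.
Hypothesis w_sum1 : \sum_i w i = 1.
Implicit Types (F : I -> R).

Lemma convex_subr F c : \sum_i w i * (F i - c) = \sum_i w i * F i - c.
Proof. by under eq_bigr do rewrite mulrBr; rewrite sumrB -mulr_suml w_sum1 mul1r. Qed.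

Lemma convex_le F hi : (forall i, F i <= hi) -> \sum_i w i * F i <= hi.
Proof.
move=> Fhi; rewrite -subr_le0 -convex_subr; apply: sumr_le0 => i _.
by apply: mulr_ge0_le0; rewrite ?subr_le0.
Qed.

Lemma convex_ge F lo : (forall i, lo <= F i) -> lo <= \sum_i w i * F i.
Proof.
move=> Flo; rewrite -subr_ge0 -convex_subr; apply: sumr_ge0 => i _.
by apply: mulr_ge0; rewrite ?subr_ge0.
Qed.

Lemma convex_term_ge F lo j : (forall i, lo <= F i) ->
  w j * (F j - lo) <= \sum_i w i * F i - lo.
Proof.
move=> Flo; rewrite -convex_subr (bigD1 j) //= lerDl.
by apply: sumr_ge0 => i _; apply: mulr_ge0; rewrite ?subr_ge0.
Qed.

Lemma convex_term_le F hi j : (forall i, F i <= hi) ->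
  w j * (hi - F j) <= hi - \sum_i w i * F i.
Proof.
move=> Fhi; have := convex_term_ge (F := fun i => - F i) (lo := - hi) j.
under eq_bigr do rewrite mulrN; rewrite sumrN opprK !(addrC _ hi).
by apply => i; rewrite lerN2.
Qed.

End Convex.

Section ShiftAlongOnes.
Context {R : realType} {I : finType}.
Implicit Types (g : (I -> R) -> R) (x : I -> R).

Lemma SISTr_le g x c1 c2 : SISTr g x -> c1 <= c2 ->
  g (vadd x (vscale c1 ones)) <= g (vadd x (vscale c2 ones)).
Proof.
by move=> [g_incr _]; rewrite le_eqVlt => /predU1P[->|/g_incr/ltW].
Qed.

Lemma SISTr_shift_bounded g x N : SISTr g x ->
  exists B, forall c, `|g (vadd x (vscale c ones))| <= N -> `|c| <= B.
Proof.
move=> gx; have [_ g_onto] := gx.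
have [chi g_chi] := g_onto (N + 1); have [clo g_clo] := g_onto (- N - 1).
exists (`|chi| + `|clo|) => c; rewrite ler_norml => /andP[gc_ge gc_le].
have c_lt_chi : c < chi.
  by rewrite ltNge; apply/negP => /(SISTr_le gx); rewrite g_chi; lra.
have clo_lt_c : clo < c.
  by rewrite ltNge; apply/negP => /(SISTr_le gx); rewrite g_clo; lra.
have := ler_norm chi; have := ler_norm (- clo); rewrite normrN.
have := normr_ge0 chi; have := normr_ge0 clo.
rewrite ler_norml => ? ? ? ?; apply/andP; split; lra.
Qed.

End ShiftAlongOnes.

Section Lipschitz.
Context {R : realType} {I : finType} (g : (I -> R) -> R) (L : R).
Hypothesis gL : forall x y, `|g x - g y| <= L * supnorm (vsub x y).

Lemma lipschitz_le x y d : supnorm (vsub x y) <= d -> `|g x - g y| <= `|L| * d.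
Proof.
move=> xy_d; apply: le_trans (gL x y) _; apply: le_trans (_ : `|L| * supnorm (vsub x y) <= _).
  by apply: ler_wpM2r; [exact: supnorm_ge0 | exact: ler_norm].
by apply: ler_wpM2l.
Qed.

Lemma lipschitz_shift_gt q x eta rho d c : SISTr g q ->
  rho <= g (vadd q (vscale eta ones)) - g q -> `|L| * d < rho -> eta <= c ->
  supnorm (vsub x (vadd q (vscale c ones))) <= d -> g q < g x.
Proof.
move=> gq q_rho Ld_rho eta_c /lipschitz_le; rewrite ler_norml => /andP[? _].
by have := SISTr_le gq eta_c; lra.
Qed.

Lemma lipschitz_shift_lt q x eta rho d c : SISTr g q ->
  rho <= g q - g (vadd q (vscale (- eta) ones)) -> `|L| * d < rho -> c <= - eta ->
  supnorm (vsub x (vadd q (vscale c ones))) <= d -> g x < g q.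
Proof.
move=> gq q_rho Ld_rho c_eta /lipschitz_le; rewrite ler_norml => /andP[_ ?].
by have := SISTr_le gq c_eta; lra.
Qed.

End Lipschitz.

Section Compactness.
Context {R : realType}.

Lemma lipschitz_continuous_rV n (phi : 'rV[R]_n -> R) K :
  (forall v w, `|phi v - phi w| <= K * `|v - w|) -> continuous phi.
Proof.
move=> phiK v; apply/(@cvgrPdist_lt _ _ _ (nbhs v) (nbhs_filter v)) => e e_gt0.
have K1_gt0 : 0 < `|K| + 1 by rewrite ltr_wpDl.
near=> w; apply: le_lt_trans (phiK v w) _.
apply: le_lt_trans (_ : (`|K| + 1) * `|v - w| < e).
  by apply: ler_wpM2r => //; apply: le_trans (ler_norm K) _; rewrite lerDl.
rewrite -ltr_pdivlMl //; near: w.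
apply: (@cvgr_dist_lt _ _ _ (nbhs v) (nbhs_filter v) id v cvg_id).
by rewrite mulr_gt0 ?invr_gt0.
Unshelve. all: by end_near.
Qed.

Context {I : finType}.

Definition vec_of_rV (v : 'rV[R]_#|I|) : I -> R := fun i => v ord0 (enum_rank i).

Lemma supnorm_vec_of_rV (v w : 'rV[R]_#|I|) :
  supnorm (vsub (vec_of_rV v) (vec_of_rV w)) <= `|v - w|.
Proof.
apply: supnorm_le => // i; rewrite /vsub /vec_of_rV.
have -> : v ord0 (enum_rank i) - w ord0 (enum_rank i) = (v - w) ord0 (enum_rank i).
  by rewrite !mxE.
have -> : `|v - w| = mx_norm (v - w) by [].
by rewrite mx_normrE; apply/bigmax_geP; right; exists (ord0, enum_rank i).
Qed.

Lemma uniform_shift_increment (g : (I -> R) -> R) L eta B :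
  (forall x y, `|g x - g y| <= L * supnorm (vsub x y)) -> (forall x, SISTr g x) ->
  0 < eta -> 0 <= B ->
  exists2 rho, 0 < rho & forall z, (forall i, `|z i| <= B) ->
    rho <= g (vadd z (vscale eta ones)) - g z.
Proof.
move=> gL gS eta_gt0 B_ge0.
pose phi v := g (vadd (vec_of_rV v) (vscale eta ones)) - g (vec_of_rV v).
pose box := [set v : 'rV[R]_#|I| | forall j, `[- B, B]%classic (v ord0 j)].
have box_compact : compact box.
  by apply: (@rV_compact _ _ (fun _ => `[- B, B]%classic)) => _; exact: segment_compact.
have box_nonempty : box !=set0.
  by exists 0 => j /=; rewrite mxE in_itv /= oppr_le0 B_ge0.
have phi_lip v w : `|phi v - phi w| <= (`|L| + `|L|) * `|v - w|.
  have vw := supnorm_vec_of_rV v w.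
  have shiftE : vsub (vadd (vec_of_rV v) (vscale eta ones))
                     (vadd (vec_of_rV w) (vscale eta ones)) = vsub (vec_of_rV v) (vec_of_rV w).
    by apply: funext => i; rewrite /vsub /vadd; ring.
  have h_shift : `|g (vadd (vec_of_rV v) (vscale eta ones)) -
                   g (vadd (vec_of_rV w) (vscale eta ones))| <= `|L| * `|v - w|.
    by apply: (lipschitz_le gL); rewrite shiftE.
  have -> : phi v - phi w =
      (g (vadd (vec_of_rV v) (vscale eta ones)) - g (vadd (vec_of_rV w) (vscale eta ones)))
      - (g (vec_of_rV v) - g (vec_of_rV w)) by rewrite /phi; ring.
  by rewrite mulrDl; apply: le_trans (ler_normB _ _) (lerD h_shift (lipschitz_le gL vw)).
have [c c_box c_min] :=
  EVT_min_rV box_nonempty box_compact (continuous_subspaceT (lipschitz_continuous_rV phi_lip)).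
exists (phi c).
  have [g_incr _] := gS (vec_of_rV c); have := g_incr 0 eta eta_gt0.
  have -> : vadd (vec_of_rV c) (vscale 0 ones) = vec_of_rV c.
    by apply: funext => i; rewrite /vadd /vscale mul0r addr0.
  by rewrite /phi subr_gt0.
move=> z z_B; pose v : 'rV[R]_#|I| := \row_j z (enum_val j).
have vz : vec_of_rV v = z by apply: funext => i; rewrite /vec_of_rV /v mxE enum_rankK.
have v_box : v \in box.
  rewrite inE /= => j; rewrite /v mxE /= in_itv /=; have := z_B (enum_val j).
  by rewrite ler_norml.
by have := c_min v v_box; rewrite /phi vz.
Qed.

End Compactness.

Section FiniteGraph.
Context {R : realType} {S : finType} (e : rel S) (g : S -> R) (F : R -> R).
Hypothesis F_infl : forall b, 0 <= b -> b <= F b.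
Hypothesis g_step : forall s s' b, 0 <= b -> e s s' -> g s <= b -> g s' <= F b.

Lemma iter_infl_ge0 n : 0 <= iter n F 0.
Proof. by elim: n => //= n n_ge0; exact: le_trans n_ge0 (F_infl n_ge0). Qed.

Lemma iter_infl_le m n : (m <= n)%N -> iter m F 0 <= iter n F 0.
Proof.
apply: (homo_leq (f := fun k => iter k F 0) (r := fun a b => a <= b)) => // [y x z|i].
  exact: le_trans.
exact: F_infl (iter_infl_ge0 i).
Qed.

Lemma path_iter_bound p z b : 0 <= b -> path e z p -> g z <= b ->
  g (last z p) <= iter (size p) F b.
Proof.
elim: p z b => [|w p IH] z b b_ge0 //= /andP[e_zw p_path] gz.
rewrite -iterS iterSr; apply: IH p_path (g_step b_ge0 e_zw gz).
exact: le_trans b_ge0 (F_infl b_ge0).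
Qed.

Lemma connect_iter_bound x y : connect e x y -> g x <= 0 -> g y <= iter #|S| F 0.
Proof.
move=> /connectP[p p_path ->] gx; case: (shortenP p_path) => p' p'_path p'_uniq _.
apply: le_trans (path_iter_bound (lexx 0) p'_path gx) (iter_infl_le _).
by apply: ltnW; rewrite -[(size p').+1]/(size (x :: p')) -(card_uniqP p'_uniq) max_card.
Qed.

End FiniteGraph.

Section RealLine.
Context {R : realType}.

Lemma derive_lt_barrier (g : R -> R) (c gam t1 d : R) : 0 < t1 ->
  is_derive t1 (1 : R) g d -> d < gam ->
  (forall t, 0 <= t < t1 -> g t < c + gam * t) -> g t1 < c + gam * t1.
Proof.
move=> t1_gt0 [g_der <-] d_lt below; rewrite ltNge; apply/negP => crossed.
pose Q h := h^-1 *: ((g \o shift t1) (h *: 1) - g t1).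
have Q_cvg : Q @ 0^' --> 'D_1 g t1 by exact: g_der.
have [h [Qh_lt [h_lt0 h_gt]]] : exists h, Q h < gam /\ h < 0 /\ - t1 < h.
  apply: (@filter_ex _ (0 : R)^'- _); near=> h; split; [|split]; near: h.
  - exact: cvgr_lt (cvg_dnbhs_at_left Q_cvg) _ d_lt.
  - exact: nbhs_left_lt.
  - by apply: nbhs_left_gt; rewrite oppr_lt0.
have g_below : g (t1 + h) < c + gam * (t1 + h) by apply: below; apply/andP; split; lra.
move: Qh_lt; rewrite /Q /shift /= scaler1 [h + t1]addrC.
have h_inv : h^-1 * (gam * h) = gam by rewrite mulrCA mulVf ?mulr1 // lt_eqF.
rewrite -[X in _ < X]h_inv ltr_nM2l ?invr_lt0 //; lra.
Unshelve. all: by end_near.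
Qed.

Lemma near_right_interval (G : R -> Prop) t :
  (\forall s \near t^'+, G s) -> exists2 k, 0 < k & forall s, t < s < t + k -> G s.
Proof.
rewrite near_withinE => /nbhs_ballP[k /= k_gt0 Gk]; exists k => // s /andP[ts sk].
by apply: Gk => //; rewrite /ball /= ltr_norml; apply/andP; split; lra.
Qed.

Lemma real_induction (G : R -> Prop) (T : R) : 0 <= T -> G 0 ->
  (forall t, 0 < t <= T -> (forall s, 0 <= s < t -> G s) -> G t) ->
  (forall t, 0 <= t < T -> G t -> \forall s \near t^'+, G s) ->
  G T.
Proof.
move=> T_ge0 G0 G_closed G_open.
pose E := [set s | 0 <= s <= T /\ forall t, 0 <= t <= s -> G t].
have E0 : E 0.
  split=> [|t]; first by rewrite lexx T_ge0.
  by move=> t_eq0; rewrite (_ : t = 0) //; apply/eqP; rewrite eq_le andbC.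
have E_sup : has_sup E by split; [exists 0 | exists T => s [/andP[]]].
pose t1 := sup E.
have t1_ge0 : 0 <= t1 := sup_upper_bound E_sup E0.
have t1_le : t1 <= T by apply: ge_sup; [exists 0 | move=> s [/andP[]]].
have G_before s : 0 <= s < t1 -> G s.
  move=> /andP[s_ge0 s_lt]; have gap : 0 < t1 - s by rewrite subr_gt0.
  have [r [_ Gr] sr] := sup_adherent gap E_sup.
  by apply: Gr; rewrite s_ge0 /=; rewrite -/t1 in sr; lra.
have G_t1 : G t1.
  have [t1_eq0|t1_gt0] := eqVneq t1 0; first by rewrite t1_eq0.
  by apply: G_closed => //; rewrite lt_neqAle eq_sym t1_gt0 t1_ge0.
have E_t1 : E t1.
  split=> [|t /andP[t_ge0]]; first by rewrite t1_ge0.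
  by rewrite le_eqVlt => /predU1P[-> //|t_lt]; apply: G_before; rewrite t_ge0.
have [T_le_t1|t1_lt] := leP T t1.
  by have -> : T = t1 by apply/le_anti; rewrite T_le_t1 t1_le.
have [k k_gt0 Gk] : exists2 k, 0 < k & forall s, t1 < s < t1 + k -> G s.
  by apply/near_right_interval/G_open => //; rewrite t1_ge0.
pose s := Num.min (t1 + k / 2) T.
suff : E s by move/(sup_upper_bound E_sup); rewrite /s -/t1 ge_min; lra.
split=> [|t /andP[t_ge0 t_le]]; first by rewrite /s le_min ge_min lexx orbT; lra.
have [t_le1|t_gt1] := leP t t1; first by apply: E_t1.2; rewrite t_ge0.
by apply: Gk; rewrite t_gt1 /=; move: t_le; rewrite /s le_min; lra.
Qed.

Lemma cvg_right_barrier (u : R -> R) (c gam t : R) : 0 <= gam ->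
  u @ t^'+ --> u t -> u t < c + gam * t -> \forall s \near t^'+, u s < c + gam * s.
Proof.
move=> gam_ge0 u_cvg ut_lt; near=> s.
apply: lt_le_trans (_ : c + gam * t <= _); last by rewrite lerD2l ler_wpM2l // ltW.
by near: s; exact: cvgr_lt u_cvg _ ut_lt.
Unshelve. all: by end_near.
Qed.

End RealLine.

Section OdeSolution.
Context {R : realType} {I : finType} (F : (I -> R) -> I -> R) (x : R -> I -> R).
Hypothesis x_sol : ode_solution F x.

Lemma ode_solution_derive (t : R) i : 0 < t ->
  is_derive t (1 : R) (fun u => x u i) (F (x t) i).
Proof. exact: (x_sol i).1. Qed.

Lemma ode_solution_cvg_right (t : R) i : 0 <= t -> (fun u => x u i) @ t^'+ --> x t i.
Proof.
rewrite le_eqVlt => /predU1P[<-|t_gt0]; first exact: (x_sol i).2.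
apply: cvg_at_right_filter; have [x_der _] := ode_solution_derive i t_gt0.
exact: differentiable_continuous ((derivable1_diffP _ _).1 x_der).
Qed.

End OdeSolution.

Section Transitions.
Context {R : realType} {S A : finType} (P : smdp_kernel R S A).
Hypothesis P_law : is_smdp_law P.

Lemma ptrans_ge0 s a s' : 0 <= ptrans P s a s'.
Proof. by rewrite /ptrans fine_ge0 // measure_ge0. Qed.

Lemma ptrans_sum1 s a : \sum_s' ptrans P s a s' = 1.
Proof.
have sum1 := P_law.1 s a.
have fin s' : P s a s' setT \is a fin_num.
  have : (\sum_s'' P s a s'' setT)%E \is a fin_num by rewrite sum1.
  by move/sum_fin_numP; apply => //; rewrite mem_index_enum.
by rewrite /ptrans sum_fine ?sum1 // => s' _; exact: fin.
Qed.

End Transitions.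

Section GreedyValue.
Context {R : realType} {S A : finType}.
Implicit Types (q : S * A -> R).

Definition vmax q s a0 : R := \big[Num.max/q (s, a0)]_a q (s, a).

Lemma vmax_ge q s a0 a : q (s, a) <= vmax q s a0.
Proof. exact: le_bigmax. Qed.

Lemma vmax_indep q s a0 a1 : vmax q s a0 = vmax q s a1.
Proof.
by apply/le_anti/andP; split; rewrite {1}/vmax; apply: bigmax_le => *; exact: vmax_ge.
Qed.

Lemma vmax_attained q s a0 : exists a, vmax q s a0 = q (s, a).
Proof.
rewrite /vmax; elim/big_ind: _ => [|u v [a ->] [a' ->]|a _]; first by exists a0.
  by rewrite /Num.max; case: ifP => _; [exists a' | exists a].
by exists a.
Qed.

End GreedyValue.

Section VectorField.
Context {R : realType} {S A : finType} (P : smdp_kernel R S A).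
Context (f : (S * A -> R) -> R) (alpha : R).
Hypothesis P_law : is_smdp_law P.
Hypothesis alpha_gt0 : 0 < alpha.
Hypothesis alpha_le_tmean : forall sa, alpha <= tmean P sa.

Lemma tmean_gt0 sa : 0 < tmean P sa.
Proof. exact: lt_le_trans alpha_gt0 (alpha_le_tmean sa). Qed.

Lemma hfield_eq0_bellman q a0 : hfield P alpha f q = (fun _ => 0) -> forall s a,
  q (s, a) = rmean P (s, a) + \sum_s' ptrans P s a s' * vmax q s' a0
             - tmean P (s, a) * f q.
Proof.
move=> hq s a; have := congr1 (fun g => g (s, a)) hq; rewrite /hfield /Top /=.
under eq_bigr do rewrite -/(vmax q _ a) (vmax_indep _ _ a a0).
have t_neq0 : tmean P (s, a) != 0 by rewrite gt_eqF ?tmean_gt0.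
set t := tmean P (s, a); set X := \sum_s' _; move=> h0.
have : alpha / t * (rmean P (s, a) + X - q (s, a) - t * f q) = 0.
  by rewrite -[RHS]h0; field.
move/eqP; rewrite !mulf_eq0 invr_eq0 (gt_eqF alpha_gt0) (negbTE t_neq0) /=.
by rewrite subr_eq0 => /eqP <-; ring.
Qed.

Lemma hfield_subE (y q : S * A -> R) s a :
  hfield P alpha f y (s, a) - hfield P alpha f q (s, a) =
  alpha / tmean P (s, a) *
    (\sum_s' ptrans P s a s' * (vmax y s' a - vmax q s' a) - (y (s, a) - q (s, a)))
  - alpha * (f y - f q).
Proof.
rewrite /hfield /Top /=.
under [X in _ = alpha / _ * (X - _) - _]eq_bigr do rewrite mulrBr.
by rewrite sumrB /vmax; ring.
Qed.

Lemma hfield_sub_argmax (y q : S * A -> R) i : (forall k, y k - q k <= y i - q i) ->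
  hfield P alpha f y i - hfield P alpha f q i <= - alpha * (f y - f q).
Proof.
case: i => s a y_max; rewrite hfield_subE mulNr -[X in _ <= X]add0r lerD2r.
apply: mulr_ge0_le0; first by rewrite divr_ge0 ?(ltW (tmean_gt0 _)) ?ltW.
rewrite subr_le0; apply: (convex_le (ptrans_ge0 P s a) (ptrans_sum1 P_law s a)) => s'.
have [a' ->] := vmax_attained y s' a.
by have := vmax_ge q s' a a'; have := y_max (s', a'); lra.
Qed.

Lemma hfield_sub_argmin (y q : S * A -> R) j : (forall k, y j - q j <= y k - q k) ->
  - alpha * (f y - f q) <= hfield P alpha f y j - hfield P alpha f q j.
Proof.
case: j => s a y_min; rewrite hfield_subE mulNr -[X in X <= _]add0r lerD2r.
apply: mulr_ge0; first by rewrite divr_ge0 ?(ltW (tmean_gt0 _)) ?ltW.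
rewrite subr_ge0; apply: (convex_ge (ptrans_ge0 P s a) (ptrans_sum1 P_law s a)) => s'.
have [a' ->] := vmax_attained q s' a.
by have := vmax_ge y s' a a'; have := y_min (s', a'); lra.
Qed.

End VectorField.

Section Reachability.
Context {R : realType} {S A : finType} (P : smdp_kernel R S A) (C : {set S}).
Hypothesis C_comm : forall s s', s \in C -> s' \in C ->
  exists d, is_policy d /\ reach P d s s'.
Hypothesis C_attract : forall s, s \notin C -> forall d, is_policy d -> transient P d s.

Definition det_policy (d : S -> A) : S -> A -> R := fun s a => (a == d s)%:R.
Definition det_edge (d : S -> A) : rel S := fun s s' => 0 < ptrans P s (d s) s'.
Definition any_edge : rel S := fun s s' => [exists a, 0 < ptrans P s a s'].

Lemma det_policy_is_policy d : is_policy (det_policy d).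
Proof.
split=> [s a|s]; first by rewrite /det_policy ler0n.
by rewrite /det_policy (bigD1 (d s)) //= eqxx big1 ?addr0 // => a /negbTE ->.
Qed.

Lemma policy_rel_det d : policy_rel P (det_policy d) =2 det_edge d.
Proof.
move=> s s'; rewrite /policy_rel /det_edge /det_policy (bigD1 (d s)) //= eqxx mul1r.
by rewrite big1 ?addr0 // => a /negbTE ->; rewrite mul0r.
Qed.

Lemma reach_det d s s' : reach P (det_policy d) s s' = connect (det_edge d) s s'.
Proof. by rewrite /reach (eq_connect (policy_rel_det d)). Qed.

Lemma det_connect_class d s : exists2 s', s' \in C & connect (det_edge d) s s'.
Proof.
pose reachable s := #|[pred s' | connect (det_edge d) s s']|.
suff bound n s0 : (reachable s0 <= n)%N ->
    exists2 s', s' \in C & connect (det_edge d) s0 s' by exact: bound _ s (leqnn _).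
elim: n s0 => [|n IH] s0 s0_le.
  have : (0 < reachable s0)%N by apply/card_gt0P; exists s0; rewrite inE connect0.
  by rewrite ltnNge s0_le.
have [s0C|s0_notC] := boolP (s0 \in C); first by exists s0; rewrite ?connect0.
have [s1 [s01 s10]] := C_attract s0_notC (det_policy_is_policy d).
rewrite !reach_det in s01 s10.
have [s2 s2C s12] : exists2 s2, s2 \in C & connect (det_edge d) s1 s2.
  apply: IH; rewrite -ltnS; apply: leq_trans s0_le; apply: proper_card.
  apply/properP; split; last by exists s0; rewrite !inE ?connect0.
  by apply/fintype.subsetP => z; rewrite !inE; exact: connect_trans s01.
by exists s2; last exact: connect_trans s01 s12.
Qed.

Lemma policy_rel_any_edge d s s' : policy_rel P d s s' -> any_edge s s'.
Proof.
rewrite /policy_rel => sum_gt0; apply/existsP; apply: contrapT => no_edge.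
move: sum_gt0; rewrite big1 ?ltxx // => a _.
suff -> : ptrans P s a s' = 0 by rewrite mulr0.
apply/le_anti; rewrite ptrans_ge0 andbT leNgt; apply/negP => pos.
by apply: no_edge; exists a.
Qed.

Lemma any_edge_connect_class (a0 : A) s s' : s' \in C -> connect any_edge s s'.
Proof.
move=> s'C; have [c cC sc] := det_connect_class (fun=> a0) s.
have [d [_ cs']] := C_comm cC s'C.
apply: connect_trans (_ : connect any_edge s c) _.
  by apply: connect_sub sc => u v e_uv; apply/connect1/existsP; exists a0.
by apply: connect_sub cs' => u v /policy_rel_any_edge/connect1.
Qed.

End Reachability.

Section GainBound.
Context {R : realType} {S A : finType} (P : smdp_kernel R S A).
Context (f : (S * A -> R) -> R) (alpha : R).
Hypothesis P_law : is_smdp_law P.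
Hypothesis alpha_gt0 : 0 < alpha.
Hypothesis alpha_le_tmean : forall sa, alpha <= tmean P sa.

Let tmean_pos := tmean_gt0 alpha_gt0 alpha_le_tmean.
Let bellman := hfield_eq0_bellman (f := f) alpha_gt0 alpha_le_tmean.

Definition gain_const : R := \sum_sa `|rmean P sa| / tmean P sa.
Definition residual_const : R := \sum_sa (`|rmean P sa| + tmean P sa * gain_const).
(* Null transitions contribute [0^-1 = 0], so only the positive ones matter. *)
Definition inv_ptrans_const : R :=
  \big[Num.max/1]_(x : S * A * S) (ptrans P x.1.1 x.1.2 x.2)^-1.

Lemma gain_const_ge0 : 0 <= gain_const.
Proof. by apply: sumr_ge0 => sa _; rewrite divr_ge0 ?(ltW (tmean_pos _)). Qed.

Lemma residual_const_ge0 : 0 <= residual_const.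
Proof.
apply: sumr_ge0 => sa _.
by rewrite addr_ge0 ?mulr_ge0 ?gain_const_ge0 ?(ltW (tmean_pos _)).
Qed.

Lemma inv_ptrans_const_ge1 : 1 <= inv_ptrans_const.
Proof. exact: bigmax_ge_id. Qed.

Lemma ptrans_edge_bound s a s' g c : 0 < ptrans P s a s' -> 0 <= g ->
  ptrans P s a s' * g <= c -> g <= c * inv_ptrans_const.
Proof.
move=> p_gt0 g_ge0 pg_le.
have p_inv : (ptrans P s a s')^-1 <= inv_ptrans_const.
  exact: (le_bigmax _ (fun x : S * A * S => (ptrans P x.1.1 x.1.2 x.2)^-1) (s, a, s')).
rewrite -(mulKf (lt0r_neq0 p_gt0) g) mulrC.
by apply: ler_pM; rewrite ?mulr_ge0 ?invr_ge0 ?(ltW p_gt0).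
Qed.

Lemma ratio_le_gain_const sa : `|rmean P sa| / tmean P sa <= gain_const.
Proof.
rewrite /gain_const (bigD1 sa) //= lerDl sumr_ge0 // => sa' _.
by rewrite divr_ge0 ?(ltW (tmean_pos _)).
Qed.

Lemma gain_bound (sa0 : S * A) q : hfield P alpha f q = (fun _ => 0) ->
  `|f q| <= gain_const.
Proof.
case: sa0 => s a hq; pose V s := vmax q s a.
have [s0 V_min] := exists_argmin V s; have [s1 V_max] := exists_argmax V s.
have [a1 V_s1] := vmax_attained q s1 a.
have V_mean_ge s' a' : V s0 <= \sum_s'' ptrans P s' a' s'' * V s''.
  exact: (convex_ge (ptrans_ge0 P s' a') (ptrans_sum1 P_law s' a')).
have V_mean_le s' a' : \sum_s'' ptrans P s' a' s'' * V s'' <= V s1.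
  exact: (convex_le (ptrans_ge0 P s' a') (ptrans_sum1 P_law s' a')).
rewrite ler_norml; apply/andP; split.
- have : rmean P (s0, a) <= f q * tmean P (s0, a).
    have := bellman a hq s0 a; have := vmax_ge q s0 a a; have := V_mean_ge s0 a.
    by rewrite /V; lra.
  rewrite -ler_pdivrMr ?tmean_pos //; apply: le_trans.
  have := ratio_le_gain_const (s0, a); rewrite -lerN2 => /le_trans; apply.
  by rewrite -mulNr ler_wpM2r ?invr_ge0 ?(ltW (tmean_pos _)) // lerNl -normrN ler_norm.
- have : f q * tmean P (s1, a1) <= rmean P (s1, a1).
    have := bellman a hq s1 a1; have := V_mean_le s1 a1; rewrite /V V_s1; lra.
  rewrite -ler_pdivlMr ?tmean_pos // => /le_trans; apply.
  apply: le_trans (ratio_le_gain_const (s1, a1)).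
  by rewrite ler_wpM2r ?invr_ge0 ?(ltW (tmean_pos _)) // ler_norm.
Qed.

Lemma residual_bound sa q : hfield P alpha f q = (fun _ => 0) ->
  `|rmean P sa - tmean P sa * f q| <= residual_const.
Proof.
move=> hq; apply: le_trans (ler_normB _ _) _; rewrite normrM gtr0_norm ?tmean_pos //.
apply: le_trans (_ : `|rmean P sa| + tmean P sa * gain_const <= _).
  by rewrite lerD2l ler_wpM2l ?(ltW (tmean_pos _)) ?(gain_bound sa).
rewrite /residual_const (bigD1 sa) //= lerDl sumr_ge0 // => sa' _.
by rewrite addr_ge0 ?mulr_ge0 ?gain_const_ge0 ?(ltW (tmean_pos _)).
Qed.

End GainBound.

Section EdgeSteps.
Context {R : realType} {S A : finType} (P : smdp_kernel R S A).
Context (f : (S * A -> R) -> R) (alpha : R).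
Hypothesis P_law : is_smdp_law P.
Hypothesis alpha_gt0 : 0 < alpha.
Hypothesis alpha_le_tmean : forall sa, alpha <= tmean P sa.
Variable q : S * A -> R.
Hypothesis hq : hfield P alpha f q = (fun _ => 0).

Variable a0 : A.
Let bellman := hfield_eq0_bellman alpha_gt0 alpha_le_tmean a0 hq.
Let residual_le sa := residual_bound P_law alpha_gt0 alpha_le_tmean sa hq.

Lemma greedy_edge_step (d : S -> A) M u u' :
  (forall s, vmax q s a0 = q (s, d s)) -> (forall s, vmax q s a0 <= M) ->
  det_edge P d u u' ->
  M - vmax q u' a0 <= (M - vmax q u a0 + residual_const P) * inv_ptrans_const P.
Proof.
move=> d_greedy V_le edge; apply: (ptrans_edge_bound edge); first by rewrite subr_ge0.
apply: le_trans (convex_term_le (ptrans_ge0 P u (d u)) (ptrans_sum1 P_law u (d u)) u' V_le) _.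
have := bellman u (d u); rewrite -d_greedy.
by have := residual_le (u, d u); rewrite ler_norml => /andP[? ?]; lra.
Qed.

Lemma any_edge_step m u u' : (forall s, m <= vmax q s a0) -> any_edge P u u' ->
  vmax q u' a0 - m <= (vmax q u a0 - m + residual_const P) * inv_ptrans_const P.
Proof.
move=> V_ge /existsP[a edge]; apply: (ptrans_edge_bound edge); first by rewrite subr_ge0.
apply: le_trans (convex_term_ge (ptrans_ge0 P u a) (ptrans_sum1 P_law u a) u' V_ge) _.
have := bellman u a; have := vmax_ge q u a0 a.
by have := residual_le (u, a); rewrite ler_norml => /andP[? ?]; lra.
Qed.

End EdgeSteps.

Section ZeroSetBounded.
Context {R : realType} {S A : finType} (P : smdp_kernel R S A).
Context (f : (S * A -> R) -> R) (alpha : R).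
Hypothesis P_law : is_smdp_law P.
Hypothesis P_wc : weakly_communicating P.
Hypothesis alpha_gt0 : 0 < alpha.
Hypothesis alpha_le_tmean : forall sa, alpha <= tmean P sa.

Definition edge_growth (b : R) : R := (b + residual_const P) * inv_ptrans_const P.
Definition level_spread : R := residual_const P + 2 * iter #|S| edge_growth 0.

Let residual_ge0 := residual_const_ge0 alpha_gt0 alpha_le_tmean.

Lemma edge_growth_infl b : 0 <= b -> b <= edge_growth b.
Proof.
move=> b_ge0; have := inv_ptrans_const_ge1 P; rewrite /edge_growth.
by have := residual_ge0; nra.
Qed.

Lemma edge_growth_homo : {homo edge_growth : b1 b2 / b1 <= b2}.
Proof.
move=> b1 b2 b12; rewrite ler_wpM2r ?lerD2r //.
exact: le_trans ler01 (inv_ptrans_const_ge1 P).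
Qed.

Lemma zero_near_constant q (sa0 : S * A) : hfield P alpha f q = (fun _ => 0) ->
  exists m, forall i, `|q i - m| <= level_spread.
Proof.
case: sa0 => s a0 hq; pose V s := vmax q s a0.
have [C [[_ [C_comm _]] [_ C_attract]]] := P_wc.
have [s0 V_min] := exists_argmin V s; have [s1 V_max] := exists_argmax V s.
have [d d_greedy] := choice (fun s => vmax_attained q s a0).
pose beta := iter #|S| edge_growth 0.
have beta_ge0 : 0 <= beta := iter_infl_ge0 edge_growth_infl #|S|.
have [s2 s2C s1s2] := det_connect_class C_attract d s1.
have top_drop : V s1 - V s2 <= beta.
  apply: (connect_iter_bound (g := fun s => V s1 - V s) edge_growth_infl _ s1s2).
    move=> u u' b b_ge0 edge drop_u; apply: le_trans (edge_growth_homo drop_u).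
    exact: (greedy_edge_step P_law alpha_gt0 alpha_le_tmean hq d_greedy V_max edge).
  by rewrite subrr.
have bottom_rise : V s2 - V s0 <= beta.
  have s0s2 := any_edge_connect_class C_comm C_attract a0 s0 s2C.
  apply: (connect_iter_bound (g := fun s => V s - V s0) edge_growth_infl _ s0s2).
    move=> u u' b b_ge0 edge rise_u; apply: le_trans (edge_growth_homo rise_u).
    exact: (any_edge_step P_law alpha_gt0 alpha_le_tmean hq V_min edge).
  by rewrite subrr.
exists (V s0) => -[u a].
have := hfield_eq0_bellman alpha_gt0 alpha_le_tmean a0 hq u a.
have := residual_bound P_law alpha_gt0 alpha_le_tmean (u, a) hq; rewrite ler_norml.
have := convex_ge (ptrans_ge0 P u a) (ptrans_sum1 P_law u a) V_min.
have := convex_le (ptrans_ge0 P u a) (ptrans_sum1 P_law u a) V_max.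
move: top_drop bottom_rise; rewrite /level_spread -/beta /V => ? ? ? ? /andP[? ?] ?.
by rewrite ler_norml; apply/andP; split; lra.
Qed.

Lemma level_spread_ge0 : 0 <= level_spread.
Proof. by rewrite addr_ge0 ?mulr_ge0 ?residual_ge0 ?(iter_infl_ge0 edge_growth_infl). Qed.

Lemma zero_set_bounded L :
  (forall x y, `|f x - f y| <= L * supnorm (vsub x y)) -> SISTr f (fun _ => 0) ->
  exists B, forall q, hfield P alpha f q = (fun _ => 0) -> forall i, `|q i| <= B.
Proof.
move=> f_lip f_SISTr0.
have [B0 level_bounded] :=
  SISTr_shift_bounded (gain_const P + `|L| * level_spread) f_SISTr0.
exists (B0 + level_spread) => q hq i.
have [m q_near_m] := zero_near_constant i hq.
have near_f : `|f q - f (vadd (fun _ => 0) (vscale m ones))| <= `|L| * level_spread.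
  apply: (lipschitz_le f_lip); apply: supnorm_le => [|j]; first exact: level_spread_ge0.
  by rewrite /vsub /vadd /vscale /ones add0r mulr1.
have m_le : `|m| <= B0.
  apply: level_bounded; set fm := f _.
  have -> : fm = (fm - f q) + f q by rewrite subrK.
  apply: le_trans (ler_normD _ _) _; rewrite addrC distrC lerD //.
  exact: gain_bound P_law alpha_gt0 alpha_le_tmean i q hq.
by rewrite -(subrK m (q i)); apply: le_trans (ler_normD _ _) _; rewrite addrC lerD.
Qed.

Lemma zero_set_shift_gain L eta :
  (forall x y, `|f x - f y| <= L * supnorm (vsub x y)) -> (forall x, SISTr f x) ->
  0 < eta -> exists2 rho, 0 < rho & forall q, hfield P alpha f q = (fun _ => 0) ->
    rho <= f (vadd q (vscale eta ones)) - f q /\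
    rho <= f q - f (vadd q (vscale (- eta) ones)).
Proof.
move=> f_lip f_SISTr eta_gt0; have [B zero_le_B] := zero_set_bounded f_lip (f_SISTr _).
have [rho rho_gt0 rho_le] := uniform_shift_increment (B := `|B| + eta) f_lip f_SISTr eta_gt0
  (addr_ge0 (normr_ge0 B) (ltW eta_gt0)).
exists rho => // q hq.
have q_box i : `|q i| <= `|B| + eta.
  by apply: le_trans (zero_le_B _ hq i) (le_trans (ler_norm B) _); rewrite lerDl ltW.
have q_down_box i : `|vadd q (vscale (- eta) ones) i| <= `|B| + eta.
  rewrite /vadd /vscale /ones mulr1; apply: le_trans (ler_normB _ _) _.
  by rewrite (gtr0_norm eta_gt0) lerD2r (le_trans (zero_le_B _ hq i) (ler_norm B)).
split; first exact: rho_le.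
have := rho_le _ q_down_box; congr (_ <= f _ - _).
by apply: funext => i; rewrite /vadd /vscale /ones; ring.
Qed.

End ZeroSetBounded.

Section Deviation.
Context {R : realType} {S A : finType} (P : smdp_kernel R S A).
Context (f : (S * A -> R) -> R) (alpha L : R).
Hypothesis P_law : is_smdp_law P.
Hypothesis alpha_gt0 : 0 < alpha.
Hypothesis alpha_le_tmean : forall sa, alpha <= tmean P sa.
Hypothesis f_lip : forall x y, `|f x - f y| <= L * supnorm (vsub x y).
Hypothesis f_SISTr : forall x, SISTr f x.
Variables (qs : S * A -> R) (eta rho delta : R).
Hypothesis qs_zero : hfield P alpha f qs = (fun _ => 0).
Hypothesis rho_up : rho <= f (vadd qs (vscale eta ones)) - f qs.
Hypothesis rho_down : rho <= f qs - f (vadd qs (vscale (- eta) ones)).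
Hypothesis eta_gt0 : 0 < eta.
Hypothesis delta_gt0 : 0 < delta.
Hypothesis L_delta : `|L| * (3 * delta) < rho.

Lemma f_gt_above z c : eta <= c -> (forall k, c <= z k - qs k <= c + 3 * delta) ->
  f qs < f z.
Proof.
move=> eta_c z_qs; apply: (lipschitz_shift_gt f_lip (f_SISTr qs) rho_up L_delta eta_c).
apply: supnorm_le => [|k]; first by rewrite mulr_ge0 ?ltW.
rewrite /vsub /vadd /vscale /ones mulr1 ler_norml.
by have /andP[] := z_qs k; lra.
Qed.

Lemma f_lt_below z c : c <= - eta -> (forall k, c - 3 * delta <= z k - qs k <= c) ->
  f z < f qs.
Proof.
move=> c_eta z_qs; apply: (lipschitz_shift_lt f_lip (f_SISTr qs) rho_down L_delta c_eta).
apply: supnorm_le => [|k]; first by rewrite mulr_ge0 ?ltW.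
rewrite /vsub /vadd /vscale /ones mulr1 ler_norml.
by have /andP[] := z_qs k; lra.
Qed.

Variable x : R -> S * A -> R.
Hypothesis x_sol : ode_solution (hfield P alpha f) x.

(* The slack [gam * t] makes every bound strict, so a first violation would force
   the violating coordinate combination to grow at rate at least [gam]. *)
Definition deviation_inv (gam t : R) : Prop := forall i j,
  [/\ (x t i - qs i) - (x t j - qs j) < 2 * delta + gam * t,
      x t i - qs i < (eta + 2 * delta) + gam * t &
      - (x t i - qs i) < (eta + 2 * delta) + gam * t].

Lemma deviation_inv_open (gam t : R) : 0 <= gam -> 0 <= t -> deviation_inv gam t ->
  \forall s \near t^'+, deviation_inv gam s.
Proof.
move=> gam_ge0 t_ge0 inv_t; apply: filter_forall => i; apply: filter_forall => j.
have [span_t up_t low_t] := inv_t i j.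
have x_cvg k : (fun u => x u k - qs k) @ t^'+ --> x t k - qs k.
  exact: cvgB (ode_solution_cvg_right x_sol (i := k) t_ge0) (cvg_cst _).
near=> s; split; near: s; apply: cvg_right_barrier => //.
- exact: cvgB (x_cvg i) (x_cvg j).
- exact: cvgN (x_cvg i).
Unshelve. all: by end_near.
Qed.

Lemma deviation_inv_closed (gam t1 : R) : 0 < gam -> 0 < t1 -> gam * t1 <= delta ->
  (forall t, 0 <= t < t1 -> deviation_inv gam t) -> deviation_inv gam t1.
Proof.
move=> gam_gt0 t1_gt0 gam_t1 inv_before i j; pose y k := x t1 k - qs k.
have [im y_max] := exists_argmax y i; have [jm y_min] := exists_argmin y i.
have h_im : hfield P alpha f (x t1) im <= - alpha * (f (x t1) - f qs).
  by have := hfield_sub_argmax f P_law alpha_gt0 alpha_le_tmean y_max; rewrite qs_zero subr0.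
have h_jm : - alpha * (f (x t1) - f qs) <= hfield P alpha f (x t1) jm.
  by have := hfield_sub_argmin f P_law alpha_gt0 alpha_le_tmean y_min; rewrite qs_zero subr0.
have D k := ode_solution_derive x_sol k t1_gt0.
have span : y im - y jm < 2 * delta + gam * t1.
  suff : x t1 im - x t1 jm < (2 * delta + qs im - qs jm) + gam * t1 by rewrite /y /= => ?; lra.
  apply: (derive_lt_barrier t1_gt0 (is_deriveB (D im) (D jm))); first lra.
  by move=> t /inv_before /(_ im jm) [span_t _ _]; rewrite !fctE; lra.
have up : y im < (eta + 2 * delta) + gam * t1.
  have [eta_lt|] := ltP eta (y jm); last by lra.
  have f_gap : 0 < alpha * (f (x t1) - f qs).
    rewrite mulr_gt0 // subr_gt0; apply: (f_gt_above (ltW eta_lt)) => k; rewrite -/(y k).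
    by have := y_max k; have := y_min k; move=> ? ?; apply/andP; split; lra.
  suff : x t1 im < (eta + 2 * delta + qs im) + gam * t1 by rewrite /y /= => ?; lra.
  apply: (derive_lt_barrier t1_gt0 (D im)); first lra.
  by move=> t /inv_before /(_ im jm) [_ up_t _]; lra.
have low : - y jm < (eta + 2 * delta) + gam * t1.
  have [|lt_eta] := leP (- eta) (y im); first by lra.
  have f_gap : 0 < alpha * (f qs - f (x t1)).
    rewrite mulr_gt0 // subr_gt0; apply: (f_lt_below (ltW lt_eta)) => k; rewrite -/(y k).
    by have := y_max k; have := y_min k; move=> ? ?; apply/andP; split; lra.
  suff : - x t1 jm < (eta + 2 * delta - qs jm) + gam * t1 by rewrite /y /= => ?; lra.
  apply: (derive_lt_barrier t1_gt0 (is_deriveN (D jm))); first lra.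
  by move=> t /inv_before /(_ jm jm) [_ _ low_t]; rewrite !fctE; lra.
rewrite -/(y i) -/(y j).
by have := y_max i; have := y_min j; have := y_min i; move=> ? ? ?; split; lra.
Qed.

Lemma deviation_bound (T : R) : 0 <= T -> (forall i, `|x 0 i - qs i| < delta) ->
  forall i, `|x T i - qs i| < eta + 3 * delta.
Proof.
move=> T_ge0 x0_near; pose gam := delta / (1 + T).
have T1_gt0 : 0 < 1 + T by lra.
have gam_gt0 : 0 < gam by rewrite divr_gt0.
have gam_T : gam * T <= delta.
  by rewrite /gam mulrAC ler_pdivrMr // mulrDr mulr1 lerDr ltW.
have inv_T : deviation_inv gam T.
  apply: (real_induction T_ge0) => [i j|t /andP[t_gt0 t_le] before|t /andP[t_ge0 _]].
  - have := x0_near i; have := x0_near j; have := eta_gt0; have := delta_gt0.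
    rewrite !ltr_norml !mulr0 !addr0 => ? ? /andP[? ?] /andP[? ?].
    by split; lra.
  - apply: deviation_inv_closed => //.
    exact: le_trans (ler_wpM2l (ltW gam_gt0) t_le) gam_T.
  - exact: deviation_inv_open (ltW gam_gt0) t_ge0.
move=> i; have [_ up low] := inv_T i i.
by rewrite ltr_norml; apply/andP; split; lra.
Qed.

End Deviation.

Lemma small_delta {R : realType} (L eps rho : R) : 0 < eps -> 0 < rho ->
  exists2 delta, 0 < delta & delta <= eps / 8 /\ `|L| * (3 * delta) < rho.
Proof.
move=> eps_gt0 rho_gt0; have L1_gt0 : 0 < 3 * (`|L| + 1) by rewrite mulr_gt0 ?ltr_wpDl.
exists (Num.min (eps / 8) (rho / (3 * (`|L| + 1)))).
  by rewrite lt_min !divr_gt0.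
split; first by rewrite ge_min lexx.
have : Num.min (eps / 8) (rho / (3 * (`|L| + 1))) * (3 * (`|L| + 1)) <= rho.
  by rewrite -ler_pdivlMr // ge_min lexx orbT.
have : 0 < Num.min (eps / 8) (rho / (3 * (`|L| + 1))) by rewrite lt_min !divr_gt0.
by have := normr_ge0 L; nra.
Qed.

Theorem lemma4p7 (R : realType) (S A : finType) (P : smdp_kernel R S A)
  (f : (S * A -> R) -> R) (alpha : R) :
  is_smdp_law P -> cond_M P -> weakly_communicating P -> cond_F f ->
  0 < alpha -> (forall sa, alpha <= tmean P sa) ->
  forall eps : R, 0 < eps -> exists delta : R, 0 < delta /\
    forall x : R -> S * A -> R,
      ode_solution (hfield P alpha f) x ->
      (exists q, hfield P alpha f q = (fun _ => 0) /\
                 supnorm (vsub (x 0) q) < delta) ->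
      forall t : R, 0 <= t ->
        exists q, hfield P alpha f q = (fun _ => 0) /\
                  supnorm (vsub (x t) q) < eps.
Proof.
move=> P_law _ P_wc [[L f_lip] [f_SISTr _]] alpha_gt0 alpha_le_tmean eps eps_gt0.
pose eta := eps / 4; have eta_gt0 : 0 < eta by rewrite divr_gt0.
have [rho rho_gt0 rho_gain] :=
  zero_set_shift_gain P_law P_wc alpha_gt0 alpha_le_tmean f_lip f_SISTr eta_gt0.
have [delta delta_gt0 [delta_eps L_delta]] := small_delta L eps_gt0 rho_gt0.
exists delta; split => // x x_sol [qs [qs_zero x0_qs]] t t_ge0; exists qs; split => //.
have [rho_up rho_down] := rho_gain qs qs_zero.
have x0_near i : `|x 0 i - qs i| < delta := le_lt_trans (ler_supnorm _ i) x0_qs.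
have x_near := deviation_bound P_law alpha_gt0 alpha_le_tmean f_lip f_SISTr qs_zero
  rho_up rho_down eta_gt0 delta_gt0 L_delta x_sol t_ge0 x0_near.
apply: supnorm_lt => // i; apply: lt_le_trans (x_near i) _.
by rewrite /eta; lra.
Qed.
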